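(* In the setting of the context (projectively uniformly hyperbolic $\{A_i\}_{i\in X}$ w.r.t. $\Sigma$, fixed multicone, branch states $R$, transition matrix $Q$, recurrent class $C$, local charts $L_{i,a}$ and matrices $B_r$, $r\in C$), we have \[ \lambda_+(B,Q|_C)=\lambda_+(A,P). \]
   Context: $X$ finite; $P$ row-stochastic irreducible; $\Sigma=\{x\in X^{\mathbb N_0}:P_{x_nx_{n+1}}>0\}$; $p$ stationary vector; $\mu$ Markov measure ($\mu([i_0,\dots,i_n])=p_{i_0}P_{i_0i_1}\cdots P_{i_{n-1}i_n}$); $\lambda_+(A,P)$ the $\mu$-a.e. value of $\lim_n\frac1n\log\|A_{x_{n-1}}\cdots A_{x_0}\|$. Projective uniform hyperbolicity: on $\widehat\Sigma=\{(x_n)_{n\in\mathbb Z}:P_{x_nx_{n+1}}>0\}$ with shift $\widehat\sigma$, a continuous splitting $\mathbb R^2=E^d(\hat x)\oplus E^w(\hat x)$ into lines with $A_{x_0}E^*(\hat x)=E^*(\widehat\sigma\hat x)$ and some $n$ with $\|A_{x_{n-1}}\cdots A_{x_0}|_{E^w}\|<\|A_{x_{n-1}}\cdots A_{x_0}|_{E^d}\|$ everywhere. Multicone: $\{M_i\}$ non-empty proper subsets of $\mathbb{RP}^1$, finite unions of open intervals, $\overline{[A_j](M_i)}\subset M_j$ when $P_{ij}>0$. $M_i=\bigsqcup_aM_{i,a}$ (components); $\beta(i,a,j)$ the unique $b$ with $[A_j](\overline{M_{i,a}})\subset M_{j,b}$; $R=\{((i,a),(j,b)):P_{ij}>0,\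 b=\beta(i,a,j)\}$; $s(r)=(i,a)$, $t(r)=(j,b)$, $\tau(r)=j$; $Q_{r,r'}=P_{\tau(r)\tau(r')}$ if $t(r)=s(r')$, else $0$; $C\subset R$ a recurrent class ($Q|_C$ irreducible, closed under transitions). $\mathcal V\subset\mathbb{RP}^1$: classes of non-zero vectors with non-negative entries; $L_{i,a}\in\mathrm{GL}_2(\mathbb R)$ with $[L_{i,a}](\mathcal V)=\overline{M_{i,a}}$; $B_r=\varepsilon(r)L_{t(r)}^{-1}A_{\tau(r)}L_{s(r)}$ with $\varepsilon(r)\in\{\pm1\}$ chosen so $B_r$ is entrywise positive. $\lambda_+(B,Q|_C)$ is the $\mu_C$-a.e. value of $\lim_n\frac1n\log\|B_{r_{n-1}}\cdots B_{r_0}\|$, where $\mu_C$ is the Markov measure of $Q|_C$ (with its stationary probability vector) on $\Sigma_C=\{(r_n)\in C^{\mathbb N_0}:Q_{r_nr_{n+1}}>0\}$. *)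

From HB Require Import structures.
From mathcomp Require Import all_boot all_order all_algebra.
From mathcomp Require Import all_classical all_reals all_analysis.
From mathcomp Require Import generic_quotient ring.
Import Order.TTheory GRing.Theory Num.Theory numFieldNormedType.Exports.
Local Open Scope classical_set_scope.
Local Open Scope ring_scope.
Set Implicit Arguments.
Unset Strict Implicit.
Unset Printing Implicit Defensive.

Section RP1.
Local Open Scope quotient_scope.
Variable R : realType.
Definition nzvec := set_type [set v : 'cV[R]_2 | v != 0].
Definition c0 (v : 'cV[R]_2) := v ord0 ord0.
Definition c1 (v : 'cV[R]_2) := v ord_max ord0.
Definition collin (u v : nzvec) : bool :=
  c0 (val u) * c1 (val v) == c1 (val u) * c0 (val v).
Lemma collin_refl : reflexive collin.
Proof. by move=> u; rewrite /collin mulrC. Qed.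
Lemma collin_sym : symmetric collin.
Proof. by move=> u v; rewrite /collin eq_sym [c0 _ * _]mulrC [c1 _ * _]mulrC. Qed.
Lemma nz_coord (v : nzvec) : c0 (val v) != 0 \/ c1 (val v) != 0.
Proof.
case: v => v /= /set_mem /= vnz.
case: (eqVneq (c0 v) 0) => h0; last by left.
case: (eqVneq (c1 v) 0) => h1; last by right.
exfalso; move/eqP: vnz; apply; apply/matrixP => i j.
rewrite !mxE (ord1 j); case: (unliftP ord0 i) => [k ->|->] //.
have -> : lift ord0 k = ord_max by apply/val_inj; rewrite (ord1 k).
exact: h1.
Qed.
Lemma collin_trans : transitive collin.
Proof.
move=> v u w; rewrite /collin => /eqP h1 /eqP h2; apply/eqP.
case: (nz_coord v) => hv.
- apply: (mulIf hv).
  have -> : c0 (val u) * c1 (val w) * c0 (val v) = c0 (val u) * (c0 (val v) * c1 (val w)) by ring.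
  rewrite h2.
  have -> : c0 (val u) * (c1 (val v) * c0 (val w)) = (c0 (val u) * c1 (val v)) * c0 (val w) by ring.
  by rewrite h1; ring.
- apply: (mulIf hv).
  have -> : c0 (val u) * c1 (val w) * c1 (val v) = (c0 (val u) * c1 (val v)) * c1 (val w) by ring.
  rewrite h1.
  have -> : c1 (val u) * c0 (val v) * c1 (val w) = c1 (val u) * (c0 (val v) * c1 (val w)) by ring.
  by rewrite h2; ring.
Qed.
Canonical collin_equiv := EquivRel collin collin_refl collin_sym collin_trans.
Definition RP1q := {eq_quot collin}.
Definition RP1 := quotient_topology [the quotType nzvec of RP1q].

Definition e1v : 'cV[R]_2 := \col_i (i == ord0)%:R.
Lemma e1v_nz : e1v \in [set v : 'cV[R]_2 | v != 0].
Proof.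
apply/mem_set; apply/eqP => /matrixP /(_ ord0 ord0); rewrite !mxE eqxx /=.
by move/eqP; rewrite oner_eq0.
Qed.
Definition e1nz : nzvec := exist _ e1v e1v_nz.

Definition mkRP (v : 'cV[R]_2) : RP1 := \pi_RP1 (insubd e1nz v).

Definition act (M : 'M[R]_2) (l : RP1) : RP1 := mkRP (M *m val (repr l)).

Definition vnorm (v : 'cV[R]_2) : R := Num.sqrt (c0 v ^+ 2 + c1 v ^+ 2).
Definition rnorm (M : 'M[R]_2) (l : RP1) : R :=
  vnorm (M *m val (repr l)) / vnorm (val (repr l)).

Definition angvec (t : R) : 'cV[R]_2 := \col_i (if i == ord0 then cos t else sin t).
Definition oint (a b : R) : set RP1 := [set mkRP (angvec t) | t in `]a, b[%classic].
Definition finunion_oint (U : set RP1) : Prop :=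
  exists (n : nat) (a b : nat -> R),
    (forall k, (k < n)%N -> a k < b k) /\ U = \bigcup_(k in `I_n) oint (a k) (b k).

Definition Vcone : set RP1 :=
  [set mkRP v | v in [set v : 'cV[R]_2 | v != 0 /\ forall i, 0 <= v i ord0]].
End RP1.

Section Markov.
Variable R : realType.

Definition stochastic (T : finType) (P : T -> T -> R) : Prop :=
  (forall i j, 0 <= P i j) /\ (forall i, \sum_j P i j = 1).

Definition irreducible (T : finType) (P : T -> T -> R) : Prop :=
  forall i j, connect [rel a b | 0 < P a b] i j.

Definition stationary (T : finType) (p : T -> R) (P : T -> T -> R) : Prop :=
  (forall i, 0 <= p i) /\ \sum_i p i = 1 /\ (forall j, \sum_i p i * P i j = p j).

Fixpoint mprod (T : Type) (A : T -> 'M[R]_2) (x : nat -> T) (n : nat) : 'M[R]_2 :=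
  if n is n'.+1 then A (x n') *m mprod A x n' else 1%:M.
End Markov.

Definition seqsp (T : Type) (x0 : T) := nat -> T.
HB.instance Definition _ (T : Type) (x0 : T) := gen_eqMixin (seqsp x0).
HB.instance Definition _ (T : Type) (x0 : T) := gen_choiceMixin (seqsp x0).
HB.instance Definition _ (T : Type) (x0 : T) :=
  isPointed.Build (seqsp x0) (fun _ => x0).

Definition cyl (T : Type) (x0 : T) (n : nat) (w : nat -> T) : set (seqsp x0) :=
  [set x | forall k, (k < n)%N -> x k = w k].
Arguments cyl {T} x0 n w.
Definition cylinders (T : Type) (x0 : T) : set (set (seqsp x0)) :=
  [set C | exists n w, C = cyl x0 n w].
Arguments cylinders {T} x0.
Notation seqms x0 := (g_sigma_algebraType (cylinders x0)).

Section Measures.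
Variable R : realType.
Local Open Scope ereal_scope.

Definition markov_measure (T : finType) (x0 : T) (p : T -> R) (P : T -> T -> R)
  (mu : probability (seqms x0) R) : Prop :=
  forall (n : nat) (w : nat -> T),
    mu (cyl x0 n.+1 w) = ((p (w 0%N) * \prod_(k < n) P (w k) (w k.+1))%R)%:E.

Definition lyap_ae (T : finType) (x0 : T) (mu : probability (seqms x0) R)
  (A : T -> 'M[R]_2) (la : R) : Prop :=
  {ae mu, forall x : seqms x0,
     (fun n : nat => (n%:R^-1 * ln `|mprod A x n|)%R) @ \oo --> la}.
End Measures.

Section PUH.
Variables (R : realType) (X : finType) (P : X -> X -> R) (A : X -> 'M[R]_2).

Definition hatSigma : set (int -> X) := [set x | forall n : int, 0 < P (x n) (x (n + 1))].
Definition hshift (x : int -> X) : int -> X := fun n => x (n + 1).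

(* continuity on hatSigma for the product topology of the discrete X^Z *)
Definition hcontinuous (E : (int -> X) -> RP1 R) : Prop :=
  forall x, hatSigma x -> forall U, nbhs (E x) U ->
    exists N : nat, forall y, hatSigma y ->
      (forall n : int, (absz n <= N)%N -> y n = x n) -> U (E y).

Definition proj_unif_hyp : Prop :=
  exists Ed Ew : (int -> X) -> RP1 R,
    [/\ hcontinuous Ed, hcontinuous Ew,
        (forall x, hatSigma x -> Ed x <> Ew x),
        (forall x, hatSigma x ->
           act (A (x 0)) (Ed x) = Ed (hshift x) /\ act (A (x 0)) (Ew x) = Ew (hshift x)) &
        exists n : nat, forall x, hatSigma x ->
          rnorm (mprod A (fun k : nat => x (Posz k)) n) (Ew x)
          < rnorm (mprod A (fun k : nat => x (Posz k)) n) (Ed x)].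

Definition multicone (M : X -> set (RP1 R)) : Prop :=
  (forall i, [/\ M i <> set0, M i <> setT & finunion_oint (M i)]) /\
  (forall i j, 0 < P i j -> closure (act (A j) @` M i) `<=` M j).

Definition components_enum (M : X -> set (RP1 R)) (K : X -> finType)
  (Mc : forall i, K i -> set (RP1 R)) : Prop :=
  forall i, [/\ (forall a, exists x, M i x /\ Mc i a = connected_component (M i) x),
             injective (Mc i) &
             (forall x, M i x -> exists a, Mc i a x)].

Section Branch.
Variables (K : X -> finType) (Mc : forall i, K i -> set (RP1 R)).
Definition bstate := {i : X & K i}.
Definition Rrel (r : bstate * bstate) : bool :=
  (0 < P (tag r.1) (tag r.2)) &&
  `[< act (A (tag r.2)) @` closure (Mc (tagged r.1)) `<=` Mc (tagged r.2) >].
Definition branch := {r : bstate * bstate | Rrel r}.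
Definition bs (r : branch) : bstate := (val r).1.
Definition bt (r : branch) : bstate := (val r).2.
Definition btau (r : branch) : X := tag (bt r).
Definition Qm (r r' : branch) : R := if bt r == bs r' then P (btau r) (btau r') else 0.

Definition recurrent_class (C : {set branch}) : Prop :=
  [/\ C != finset.set0,
      (forall r r', r \in C -> 0 < Qm r r' -> r' \in C) &
      (forall r r', r \in C -> r' \in C ->
         connect [rel a b | [&& a \in C, b \in C & 0 < Qm a b]] r r')].

Definition QC (C : {set branch}) (a b : {r : branch | r \in C}) : R := Qm (val a) (val b).

Definition Bm (L : bstate -> 'M[R]_2) (eps : branch -> R) (r : branch) : 'M[R]_2 :=
  eps r *: (invmx (L (bt r)) *m A (btau r) *m L (bs r)).
End Branch.
End PUH.

From HB Require Import structures.
From mathcomp Require Import all_boot all_order all_algebra.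
From mathcomp Require Import all_classical all_reals all_analysis.
From mathcomp Require Import ring lra.
Import Order.TTheory GRing.Theory Num.Theory numFieldNormedType.Exports.
Local Open Scope classical_set_scope.
Local Open Scope ring_scope.
Set Implicit Arguments.
Unset Strict Implicit.
Unset Printing Implicit Defensive.

(* Let [tauC : C -> X] read off the target symbol of a branch.  Distinct
   components of [M i] are disjoint, so a branch has at most one [Q]-successor
   over each symbol: [\sum_(tauC c' = j) Q c c' <= P (tauC c) j].  Stationarity
   of [q] forces equality wherever [q c > 0]; the image of [q] under [tauC] is
   then [P]-stationary, hence equal to [p] by irreducibility, and [tauC] maps
   the Markov measure of [Q|_C] onto that of [P].  So [lamA] is also the growth
   rate of the [A]-products along [tauC] of a [muC]-typical path, and along such
   an admissible path the [B]-products telescope to [+-] the [A]-products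
   conjugated by two of the finitely many [L]'s; their norms differ by a bounded
   factor and the exponents coincide. *)

Section StationaryUnique.
Variables (R : realType) (T : finType) (P : T -> T -> R).
Hypotheses (HP : stochastic P) (HPirr : irreducible P).

Lemma invariant_eq0 (v : T -> R) : (forall i, 0 <= v i) ->
  (forall j, \sum_i v i * P i j = v j) -> forall j, v j = 0 -> forall i, v i = 0.
Proof.
move=> v_ge0 v_inv j vj0 i.
have /connectP [s ipath jlast] := HPirr i j; subst j.
elim: s i ipath vj0 => [|x s IHs] i //= /andP [Pix ipath] /(IHs _ ipath) vx0.
have : \sum_k v k * P k x == 0 by rewrite v_inv vx0.
rewrite psumr_eq0; last by move=> k _; rewrite mulr_ge0 // HP.1.
move/allP/(_ i (mem_index_enum _)) => /=.
by rewrite mulf_eq0 (gt_eqF Pix) orbF => /eqP.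
Qed.

Lemma stationary_gt0 (v : T -> R) : stationary v P -> forall i, 0 < v i.
Proof.
case=> v_ge0 [v_sum1 v_inv] i; rewrite lt_def v_ge0 andbT; apply/eqP => vi0.
move: v_sum1; rewrite big1 => [/esym/eqP|k _]; first by rewrite oner_eq0.
exact: invariant_eq0 vi0 k.
Qed.

(* Subtracting the largest multiple of [v] lying below [w] leaves a
   nonnegative invariant vector with a zero, hence zero everywhere. *)
Lemma stationary_unique (v w : T -> R) : stationary v P -> stationary w P -> w = v.
Proof.
move=> v_stat w_stat; have v_gt0 := stationary_gt0 v_stat.
case: v_stat => _ [v_sum1 v_inv]; case: w_stat => _ [w_sum1 w_inv].
have [i0 _] : exists i0 : T, True.
  case: (pickP (@predT T)) => [i _|T0]; first by exists i.
  by move: v_sum1; rewrite big_pred0 // => /esym/eqP; rewrite oner_eq0.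
pose ratio i := w i / v i.
have [m _ m_min] := @arg_minP _ R T i0 xpredT ratio isT.
pose u i := w i - ratio m * v i.
have u_ge0 i : 0 <= u i by rewrite subr_ge0 -ler_pdivlMr //; exact: m_min.
have u_inv j : \sum_i u i * P i j = u j.
  rewrite /u -w_inv -v_inv mulr_sumr -sumrB; apply: eq_bigr => i _; ring.
have um0 : u m = 0 by rewrite /u /ratio divfK ?subrr // gt_eqF.
have w_prop i : w i = ratio m * v i.
  by apply/eqP; rewrite -subr_eq0; apply/eqP/(invariant_eq0 u_ge0 u_inv um0).
have ratio1 : ratio m = 1.
  by move: w_sum1; rewrite (eq_bigr _ (fun i _ => w_prop i)) -mulr_sumr v_sum1 mulr1.
by apply: funext => i; rewrite w_prop ratio1 mul1r.
Qed.
End StationaryUnique.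

Section SequenceSpace.
Variables (T : finType) (x0 : T).

Definition init_tuple n (y : seqsp x0) : n.-tuple T := [tuple y (val k) | k < n].

Lemma cyl_init_tupleE n (u : n.-tuple T) y : cyl x0 n (nth x0 u) y <-> init_tuple n y = u.
Proof.
split => [yu|<- k kn].
  by apply: eq_from_tnth => i; rewrite tnth_mktuple (tnth_nth x0); exact: yu (ltn_ord i).
by rewrite -[k]/(val (Ordinal kn)) -tnth_nth tnth_mktuple.
Qed.

Lemma init_tuple_setE n (Qb : pred (n.-tuple T)) :
  [set y : seqsp x0 | Qb (init_tuple n y)] = \big[setU/set0]_(u | Qb u) cyl x0 n (nth x0 u).
Proof.
rewrite -bigcup_seq_cond; apply/seteqP; split => y /=.
  move=> Qy; exists (init_tuple n y); first by rewrite /= mem_index_enum.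
  exact/cyl_init_tupleE.
by move=> [u /andP [_ Qu] /cyl_init_tupleE ->].
Qed.

Lemma measurable_cyl n w : measurable (cyl x0 n w : set (seqms x0)).
Proof. by apply: sub_sigma_algebra; exists n, w. Qed.

Lemma measurable_init_tuple_set n (Qb : pred (n.-tuple T)) :
  measurable ([set y : seqsp x0 | Qb (init_tuple n y)] : set (seqms x0)).
Proof.
by rewrite init_tuple_setE; apply: bigsetU_measurable => u _; exact: measurable_cyl.
Qed.

Lemma measure_init_tuple_set (R : realType) (mu : {measure set (seqms x0) -> \bar R})
    n (Qb : pred (n.-tuple T)) :
  mu [set y : seqsp x0 | Qb (init_tuple n y)] = (\sum_(u | Qb u) mu (cyl x0 n (nth x0 u)))%E.
Proof.
have in_T (Qu : pred (n.-tuple T)) : Qu =1 (fun u => (u \in {: n.-tuple T}) && Qu u) by [].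
rewrite init_tuple_setE (eq_bigl _ _ (in_T Qb)) big_enum_val_cond.
rewrite measure_bigsetU_ord_cond => [|i _|i j _ _ [y [/cyl_init_tupleE yi /cyl_init_tupleE yj]]].
- by rewrite [RHS](eq_bigl _ _ (in_T Qb)) big_enum_val_cond.
- exact: measurable_cyl.
- by apply: enum_val_inj; rewrite -yi -yj.
Qed.

(* Disjoint cylinders meet in [set0], which is no cylinder: adding it makes
   a pi-system. *)
Definition cylinders0 : set (set (seqms x0)) := [set S | S = set0 \/ cylinders x0 S].

Lemma cylinders0_setI_closed : setI_closed cylinders0.
Proof.
move=> S1 S2 [->|[n [w ->]]]; first by left; rewrite set0I.
move=> [->|[m [v ->]]]; first by left; rewrite setI0.
case: (pselect (exists k, [/\ (k < n)%N, (k < m)%N & w k <> v k])).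
  case=> k [kn km wv]; left; apply/seteqP; split => // y [/= yw yv].
  by apply: wv; rewrite -(yw k kn) (yv k km).
move=> compatible; right; exists (maxn n m), (fun k => if (k < n)%N then w k else v k).
apply/seteqP; split => y.
  move=> [/= yw yv] k; rewrite leq_max => /orP [kn|km]; first by rewrite kn yw.
  by case: ifP => kn; [rewrite yw|rewrite yv].
move=> /= yu; split => k kk; first by rewrite yu ?kk // leq_max kk.
rewrite yu ?leq_max ?kk ?orbT //; case: ifP => // kn.
by apply: contra_notP compatible => wv; exists k.
Qed.

Lemma measurable_cylinders0 : @measurable _ (seqms x0) = <<s cylinders0 >>.
Proof.
apply/seteqP; split.
  apply: sub_smallest2r; first exact: smallest_sigma_algebra.
  by move=> S cS; right.
apply: smallest_sub; first exact: smallest_sigma_algebra.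
move=> S [->|cS]; first exact: (@measurable0 _ (seqms x0)).
exact: sub_gen_smallest.
Qed.

Lemma seq_measure_unique (R : realType) (m1 m2 : {measure set (seqms x0) -> \bar R}) :
  (forall n w, m1 (cyl x0 n w) = m2 (cyl x0 n w)) -> (m1 setT < +oo)%E ->
  forall S, measurable S -> m1 S = m2 S.
Proof.
move=> m12 m1_fin S mS.
apply: (measure_unique cylinders0 (fun=> setT)) => //.
- exact: measurable_cylinders0.
- exact: cylinders0_setI_closed.
- by move=> _; right; exists 0%N, (fun=> x0); apply/seteqP; split.
- by rewrite bigcup_const.
- by move=> S' [->|[n [w ->]]]; rewrite ?measure0.
Qed.

Lemma markov_ae_path (R : realType) (q : T -> R) (Q : T -> T -> R)
    (nu : probability (seqms x0) R) :
  markov_measure q Q nu -> {ae nu, forall y : seqms x0, forall k, Q (y k) (y k.+1) != 0}.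
Proof.
move=> Hnu.
pose stuck k (t : k.+2.-tuple T) := Q (tnth t (inord k)) (tnth t (inord k.+1)) == 0.
have stuckE k : [set y : seqms x0 | Q (y k) (y k.+1) == 0] =
    [set y : seqsp x0 | stuck k (init_tuple k.+2 y)].
  have inord_val i : (i <= k.+1)%N -> val (inord i : 'I_k.+2) = i by exact: inordK.
  apply/seteqP; split => y;
    by rewrite /= /stuck !tnth_mktuple !inord_val.
have stuck0 k : nu [set y : seqms x0 | Q (y k) (y k.+1) == 0] = 0%E.
  rewrite stuckE measure_init_tuple_set big1 // => u /eqP Qu.
  rewrite !(tnth_nth x0) !inordK // in Qu.
  apply: eq_trans (Hnu k.+1 (nth x0 u)) _.
  by rewrite (bigD1 ord_max) //= Qu mul0r mulr0.
apply: (@negligibleS _ _ _ nu (\bigcup_k [set y : seqms x0 | Q (y k) (y k.+1) == 0])).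
  move=> y /= /existsNP [k /negP/negbNE Qk]; by exists k.
apply: negligible_bigcup => k; apply/negligibleP; last exact: stuck0.
rewrite stuckE; exact: measurable_init_tuple_set.
Qed.
End SequenceSpace.

Definition seqmap (T U : finType) (t0 : T) (u0 : U) (f : T -> U) (y : seqms t0) : seqms u0 :=
  f \o y.
Arguments seqmap {T U} t0 u0 f.

Section CoordinateMap.
Variables (T U : finType) (t0 : T) (u0 : U) (f : T -> U).
Local Notation seqmap := (seqmap t0 u0 f).

Lemma seqmap_preimage_cyl n w :
  seqmap @^-1` cyl u0 n w =
  [set y : seqsp t0 | [forall k : 'I_n, f (tnth (init_tuple n y) k) == w k]].
Proof.
apply/seteqP; split => y /=.
  by move=> yw; apply/forallP => k; rewrite tnth_mktuple; apply/eqP; exact: yw (ltn_ord k).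
by move/forallP => yw k kn; have := yw (Ordinal kn); rewrite tnth_mktuple => /eqP.
Qed.

Lemma measurable_seqmap : measurable_fun setT seqmap.
Proof.
apply: (@measurability _ _ (seqms t0) (seqms u0) setT seqmap (cylinders u0) erefl).
move=> _ [_ [n [w ->]] <-].
rewrite setTI seqmap_preimage_cyl.
exact: (measurable_init_tuple_set (fun t : n.-tuple T => [forall k, f (tnth t k) == w k])).
Qed.

HB.instance Definition _ := isMeasurableFun.Build _ _ _ _ seqmap measurable_seqmap.

Lemma ae_seqmap (R : realType) (mu : probability (seqms u0) R)
    (nu : probability (seqms t0) R) (Pr : seqms u0 -> Prop) :
  (forall n w, nu (seqmap @^-1` cyl u0 n w) = mu (cyl u0 n w)) ->
  {ae mu, forall x, Pr x} -> {ae nu, forall y, Pr (seqmap y)}.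
Proof.
move=> nu_mu [N [mN muN0 notPr_N]].
exists (seqmap @^-1` N); split => [||y /= /notPr_N //].
  by rewrite -[X in measurable X]setTI; exact: measurable_seqmap.
have mu_fin : (mu setT < +oo)%E by rewrite probability_setT ltry.
have mu_distr : forall S, measurable S -> mu S = distribution nu seqmap S.
  by apply: seq_measure_unique mu_fin => n w; exact/esym/nu_mu.
by rewrite -[LHS]/(distribution nu seqmap N) -mu_distr.
Qed.
End CoordinateMap.

Lemma big_tuple_cons (R : Type) (idx : R) (op : Monoid.com_law idx) (T : finType) n
    (Pr : pred (n.+1.-tuple T)) (F : n.+1.-tuple T -> R) :
  \big[op/idx]_(t | Pr t) F t =
  \big[op/idx]_x \big[op/idx]_(t : n.-tuple T | Pr [tuple of x :: t]) F [tuple of x :: t].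
Proof.
rewrite pair_big_dep (reindex (fun p : T * n.-tuple T => [tuple of p.1 :: p.2])) //.
exists (fun t : n.+1.-tuple T => (thead t, [tuple of behead t])).
  by case=> x t _; rewrite theadE; congr pair; apply: val_inj.
by move=> t _; rewrite -tuple_eta.
Qed.

Lemma forall_tnth_cons (T : finType) n (x : T) (t : n.-tuple T) (f : T -> nat -> bool) :
  [forall k : 'I_n.+1, f (tnth [tuple of x :: t] k) k] =
  f x 0%N && [forall k : 'I_n, f (tnth t k) k.+1].
Proof.
apply/forallP/andP => [ft|[fx /forallP ft] k].
  split; first exact: (ft ord0).
  by apply/forallP => k; move: (ft (lift ord0 k)); rewrite tnthS.
by case: (unliftP ord0 k) => [j ->|->] //; rewrite tnthS.
Qed.

Lemma sum_by_fibers (R : nmodType) (T X : finType) (tau : T -> X) (F : T -> R) :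
  \sum_c F c = \sum_j \sum_(c | tau c == j) F c.
Proof. exact: partition_big. Qed.

Definition chain_weight (R : ringType) (T : Type) (Q : T -> T -> R) n (w : nat -> T) : R :=
  \prod_(k < n) Q (w k) (w k.+1).

Definition lump (R : ringType) (T X : finType) (tau : T -> X) (q : T -> R) (j : X) : R :=
  \sum_(c | tau c == j) q c.

Section Lumping.
Variables (R : realType) (T X : finType) (Q : T -> T -> R) (P : X -> X -> R).
Variables (tau : T -> X) (q : T -> R).
Hypotheses (HP : stochastic P) (HQ_ge0 : forall c c', 0 <= Q c c') (Hq : stationary q Q).
Hypothesis HQP : forall c j, \sum_(c' | tau c' == j) Q c c' <= P (tau c) j.

(* The defects [P (tau c) j - \sum_(tau c' = j) Q c c'] are nonnegative and,
   rows of [P] summing to one, their [q]-weighted total vanishes. *)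
Lemma lump_rowE c j : 0 < q c -> \sum_(c' | tau c' == j) Q c c' = P (tau c) j.
Proof.
move=> qc_gt0; case: Hq => q_ge0 [q_sum1 q_inv].
pose defect d k := P (tau d) k - \sum_(c' | tau c' == k) Q d c'.
have defect_ge0 d k : 0 <= defect d k by rewrite subr_ge0.
have : \sum_d q d * \sum_k defect d k == 0.
  have row_defect d : \sum_k defect d k = 1 - \sum_c' Q d c'.
    by rewrite sumrB -sum_by_fibers HP.2.
  under eq_bigr do rewrite row_defect mulrBr mulr1 mulr_sumr.
  by rewrite sumrB q_sum1 exchange_big /=; under eq_bigr do rewrite q_inv; rewrite q_sum1 subrr.
rewrite psumr_eq0 => [|d _]; last by rewrite mulr_ge0 ?sumr_ge0.
move/allP/(_ c (mem_index_enum _)); rewrite /= mulf_eq0 gt_eqF //=.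
rewrite psumr_eq0 // => /allP/(_ j (mem_index_enum _)).
by rewrite /defect subr_eq0 => /eqP.
Qed.

Lemma stationary_lump : stationary (lump tau q) P.
Proof.
case: Hq => q_ge0 [q_sum1 q_inv]; split; [|split].
- by move=> i; rewrite sumr_ge0.
- by rewrite /lump -q_sum1 [RHS](sum_by_fibers tau).
- move=> j; symmetry.
  transitivity (\sum_(c' | tau c' == j) \sum_c q c * Q c c').
    by apply: eq_bigr => c' _; rewrite q_inv.
  rewrite exchange_big /=; transitivity (\sum_c q c * P (tau c) j).
    apply: eq_bigr => c _; rewrite -mulr_sumr.
    have [->|qc_neq0] := eqVneq (q c) 0; first by rewrite !mul0r.
    by rewrite lump_rowE // lt_def qc_neq0 q_ge0.
  rewrite (sum_by_fibers tau); apply: eq_bigr => i _.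
  by rewrite /lump mulr_suml; apply: eq_bigr => c /eqP ->.
Qed.

Lemma stationary_succ_gt0 c c' : 0 < q c -> 0 < Q c c' -> 0 < q c'.
Proof.
move=> qc_gt0 Qcc'_gt0; case: Hq => q_ge0 [_ q_inv].
rewrite -q_inv (bigD1 c) //=; apply: (lt_le_trans (mulr_gt0 qc_gt0 Qcc'_gt0)).
by rewrite lerDl sumr_ge0 // => d _; rewrite mulr_ge0.
Qed.

Lemma lump_path_sum (t0 : T) n : forall c w, tau c = w 0%N -> 0 < q c ->
  \sum_(t : n.-tuple T | [forall k : 'I_n, tau (tnth t k) == w k.+1])
    chain_weight Q n (nth t0 (c :: t)) = chain_weight P n w.
Proof.
elim: n => [|n IHn] c w tc qc_gt0.
  rewrite (big_pred1 [tuple]) => [|t]; first by rewrite /chain_weight !big_ord0.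
  by rewrite [t]tuple0 [RHS]eqxx; apply/forallP => -[].
rewrite big_tuple_cons.
transitivity (\sum_(x | tau x == w 1%N) Q c x * chain_weight P n (fun k => w k.+1)).
  rewrite [LHS](bigID (fun x => tau x == w 1%N)) /= [X in _ + X]big1 ?addr0 => [|x /negbTE tx].
    apply: eq_bigr => x /eqP tx.
    have [Qcx0|Qcx_gt0] := eqVneq (Q c x) 0.
      by rewrite Qcx0 mul0r big1 // => t _; rewrite /chain_weight big_ord_recl /= Qcx0 mul0r.
    have qx_gt0 : 0 < q x by apply: (stationary_succ_gt0 qc_gt0); rewrite lt_def Qcx_gt0 HQ_ge0.
    rewrite -(IHn x (fun k => w k.+1)) // mulr_sumr; apply: eq_big => t.
      by rewrite (forall_tnth_cons _ _ (fun y k => tau y == w k.+1)) tx eqxx.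
    by rewrite /chain_weight big_ord_recl.
  by apply: big_pred0 => t; rewrite (forall_tnth_cons _ _ (fun y k => tau y == w k.+1)) tx.
by rewrite -mulr_suml lump_rowE // tc /chain_weight big_ord_recl.
Qed.

Lemma lump_cylinder_sum (t0 : T) n (w : nat -> X) :
  \sum_(u : n.+1.-tuple T | [forall k : 'I_n.+1, tau (tnth u k) == w k])
    q (nth t0 u 0) * chain_weight Q n (nth t0 u) = lump tau q (w 0%N) * chain_weight P n w.
Proof.
rewrite big_tuple_cons /lump mulr_suml [RHS]big_mkcond; apply: eq_bigr => x _.
under eq_bigl do rewrite (forall_tnth_cons _ _ (fun y k => tau y == w k)).
case: ifP => [/eqP tx|_]; last by rewrite big_pred0.
have [->|qx_neq0] := eqVneq (q x) 0; first by rewrite mul0r big1 // => t _; rewrite mul0r.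
rewrite -(lump_path_sum t0 n tx) ?lt_def ?qx_neq0 ?(Hq.1 x) // mulr_sumr.
by apply: eq_bigl.
Qed.

Lemma markov_measure_lump (t0 : T) (x0 : X) (mu : probability (seqms x0) R)
    (nu : probability (seqms t0) R) :
  markov_measure (lump tau q) P mu -> markov_measure q Q nu ->
  forall n w, nu (seqmap t0 x0 tau @^-1` cyl x0 n w) = mu (cyl x0 n w).
Proof.
move=> Hmu Hnu [|n] w.
  have cyl0 : cyl x0 0 w = setT by apply/seteqP; split.
  by rewrite cyl0 preimage_setT !probability_setT.
rewrite Hmu seqmap_preimage_cyl (measure_init_tuple_set (nu : {measure set _ -> \bar R})
  (fun u => [forall k : 'I_n.+1, tau (tnth u k) == w k])).
rewrite -(lump_cylinder_sum t0) -sumEFin; apply: eq_bigr => u _; exact: Hnu.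
Qed.
End Lumping.

Section Matrices.
Variable R : realType.

Lemma mxnorm_coef_le m n (M : 'M[R]_(m, n)) i j : `|M i j| <= `|M|.
Proof.
rewrite -[`|M|]/(mx_norm M) mx_normrE.
exact: (le_bigmax 0 (fun ij : 'I_m * 'I_n => `|M ij.1 ij.2|) (i, j)).
Qed.

Lemma mxnorm_mulmx_le m n p (M : 'M[R]_(m, n)) (N : 'M[R]_(n, p)) :
  `|M *m N| <= n%:R * `|M| * `|N|.
Proof.
rewrite -[`|M *m N|]/(mx_norm (M *m N)) mx_normrE.
apply: bigmax_le => [|ij _]; first by rewrite !mulr_ge0.
rewrite mxE; apply: (le_trans (ler_norm_sum _ _ _)).
apply: (@le_trans _ _ (\sum_(k < n) `|M| * `|N|)).
  by apply: ler_sum => k _; rewrite normrM ler_pM ?mxnorm_coef_le.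
by rewrite sumr_const card_ord -mulrA mulr_natl.
Qed.

Lemma mxnorm_conj_le (k : R) (U M V : 'M[R]_2) : `|U| <= k -> `|V| <= k ->
  `|U *m M *m V| <= 4 * k ^+ 2 * `|M|.
Proof.
move=> Uk Vk; have k_ge0 : 0 <= k := le_trans (normr_ge0 U) Uk.
have -> : 4 * k ^+ 2 * `|M| = 2 * (2 * k * `|M|) * k by ring.
apply: (le_trans (mxnorm_mulmx_le _ _)).
apply: (@le_trans _ _ (2 * (2 * `|U| * `|M|) * `|V|)).
  by rewrite ler_wpM2r // ler_wpM2l // mxnorm_mulmx_le.
by rewrite ler_pM ?mulr_ge0 // ler_pM2l // ler_pM ?mulr_ge0 // ler_pM2l.
Qed.

Lemma unitmx_normr_gt0 n (M : 'M[R]_n.+1) : M \in unitmx -> 0 < `|M|.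
Proof.
by move=> M_unit; rewrite normr_gt0; apply: contraTneq M_unit => ->; rewrite unitmxE det0 unitr0.
Qed.

Lemma mprod_unitmx (T : Type) (A : T -> 'M[R]_2) (x : nat -> T) n :
  (forall i, A i \in unitmx) -> mprod A x n \in unitmx.
Proof. by move=> A_unit; elim: n => [|n IHn] /=; rewrite ?unitmx1 // unitmx_mul A_unit. Qed.

Lemma mprod_conj (T U : Type) (A : T -> 'M[R]_2) (B : U -> 'M[R]_2)
    (x : nat -> T) (y : nat -> U) (L : nat -> 'M[R]_2) (e : nat -> R) :
  (forall k, L k \in unitmx) ->
  (forall k, B (y k) = e k *: (invmx (L k.+1) *m A (x k) *m L k)) ->
  forall n, mprod B y n = (\prod_(k < n) e k) *: (invmx (L n) *m mprod A x n *m L 0%N).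
Proof.
move=> L_unit By; elim=> [|n IHn] /=; first by rewrite big_ord0 scale1r mulmx1 mulVmx.
rewrite By IHn -scalemxAr -scalemxAl scalerA big_ord_recr /=.
by congr (_ *: _); rewrite !mulmxA -(mulmxA _ (L n)) mulmxV // mulmx1.
Qed.
End Matrices.

Section GrowthRate.
Variable R : realType.

Lemma ln_dist_le (c x z : R) : 0 <= x -> 0 < z -> x <= c * z -> z <= c * x ->
  `|ln x - ln z| <= ln c.
Proof.
move=> x_ge0 z_gt0 xcz zcx.
have cx_gt0 : 0 < c * x := lt_le_trans z_gt0 zcx.
have x_gt0 : 0 < x.
  by rewrite lt_def x_ge0 andbT; apply: contraTneq cx_gt0 => ->; rewrite mulr0 ltxx.
have c_gt0 : 0 < c by move: cx_gt0; rewrite pmulr_lgt0.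
have ln_le (s t : R) : 0 < s -> 0 < t -> s <= c * t -> ln s <= ln c + ln t.
  move=> s_gt0 t_gt0 sct.
  by rewrite -lnM ?posrE // ler_ln ?posrE ?mulr_gt0.
have := ln_le _ _ x_gt0 z_gt0 xcz; have := ln_le _ _ z_gt0 x_gt0 zcx.
by rewrite ler_norml; lra.
Qed.

Lemma cvg_eq_of_dist_le (u v : nat -> R) (K lu lv : R) :
  u @ \oo --> lu -> v @ \oo --> lv ->
  (forall n, `|u n.+1 - v n.+1| <= K / n.+1%:R) -> lu = lv.
Proof.
rewrite -(cvg_shiftS u) -(cvg_shiftS v) => u_lu v_lv uv_K.
have K_harm : (fun n => K / n.+1%:R) @ \oo --> 0.
  by rewrite -(mulr0 K); apply: cvgMl_tmp; exact: cvg_harmonic.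
have uv0 : (fun n => u n.+1 - v n.+1) @ \oo --> 0.
  have mK_harm : (fun n => - (K / n.+1%:R)) @ \oo --> 0 by rewrite -oppr0; exact: cvgN.
  apply: (squeeze_cvgr _ mK_harm K_harm).
  by apply: nearW => n; rewrite -ler_norml uv_K.
have u_lv : (fun n => u n.+1) @ \oo --> lv.
  have -> : (fun n => u n.+1) = (fun n => v n.+1) + (fun n => u n.+1 - v n.+1).
    by apply: funext => n /=; rewrite addrC subrK.
  by rewrite -[lv]addr0; exact: cvgD.
exact: (cvg_unique _ u_lu u_lv).
Qed.

Lemma growth_rate_eq (a b : nat -> R) (c la lb : R) :
  (forall n, 0 <= a n) -> (forall n, 0 < b n) ->
  (forall n, a n <= c * b n) -> (forall n, b n <= c * a n) ->
  (fun n => n%:R^-1 * ln (a n)) @ \oo --> la ->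
  (fun n => n%:R^-1 * ln (b n)) @ \oo --> lb -> la = lb.
Proof.
move=> a_ge0 b_gt0 acb bca a_la b_lb; apply: (cvg_eq_of_dist_le a_la b_lb) => n.
rewrite -mulrBr normrM ger0_norm ?invr_ge0 // mulrC ler_wpM2r ?invr_ge0 //.
exact: ln_dist_le.
Qed.
End GrowthRate.

Section Branches.
Variables (R : realType) (X : finType) (P : X -> X -> R) (A : X -> 'M[R]_2).
Variables (M : X -> set (RP1 R)) (K : X -> finType) (Mc : forall i, K i -> set (RP1 R)).
Hypothesis HMc : components_enum M Mc.

Lemma component_nonempty (s : bstate K) : exists y, Mc (tagged s) y.
Proof.
case: s => i a /=; have [Mc_comp _ _] := HMc i; have [x [Mx ->]] := Mc_comp a.
by exists x; exact: connected_component_refl.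
Qed.

Lemma bstate_eq (s1 s2 : bstate K) y : tag s1 = tag s2 ->
  Mc (tagged s1) y -> Mc (tagged s2) y -> s1 = s2.
Proof.
case: s1 => i a; case: s2 => j b /= ij; subst j => ya yb; case: (HMc i) => Mc_comp Mc_inj _.
have [x1 [_ a_comp]] := Mc_comp a; have [x2 [_ b_comp]] := Mc_comp b.
suff -> : a = b by [].
apply: Mc_inj; rewrite a_comp b_comp in ya yb *.
by rewrite (same_connected_component ya) (same_connected_component yb).
Qed.

Variable C : {set branch P A Mc}.
Hypothesis HP : stochastic P.
Local Notation CT := {r : branch P A Mc | r \in C}.

Definition tauC (c : CT) : X := btau (val c).

Lemma QC_link (c c' : CT) : QC c c' != 0 -> bt (val c) = bs (val c').
Proof. by rewrite /QC /Qm; case: ifP => [/eqP //|_]; rewrite eqxx. Qed.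

Lemma QCE (c c' : CT) : QC c c' != 0 -> QC c c' = P (tauC c) (tauC c').
Proof. by rewrite /QC /Qm; case: ifP => //; rewrite eqxx. Qed.

Lemma QC_ge0 (c c' : CT) : 0 <= QC c c'.
Proof. by rewrite /QC /Qm; case: ifP => // _; exact: HP.1. Qed.

(* Two successors of [c] both receive the image under [A j] of a point of the
   component [bt c]; sharing the base [j], they are the same component. *)
Lemma QC_succ_inj (c c1 c2 : CT) :
  QC c c1 != 0 -> QC c c2 != 0 -> tauC c1 = tauC c2 -> c1 = c2.
Proof.
move=> /QC_link c_c1 /QC_link c_c2 tau12.
have /andP [_ /asboolP A_c1] := valP (val c1).
have /andP [_ /asboolP A_c2] := valP (val c2).
have [x x_src] := component_nonempty (bs (val c1)).
have y1 : Mc (tagged (bt (val c1))) (act (A (tauC c1)) x).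
  by apply: A_c1; exists x => //; exact: subset_closure.
have y2 : Mc (tagged (bt (val c2))) (act (A (tauC c1)) x).
  rewrite tau12; apply: A_c2; exists x => //; apply: subset_closure.
  by change (Mc (tagged (bs (val c2))) x); rewrite -c_c2 c_c1.
apply/val_inj/val_inj; rewrite [val (val c1)]surjective_pairing [val (val c2)]surjective_pairing.
by rewrite -/(bs _) -/(bt _) -/(bs (val c2)) -/(bt (val c2)) (bstate_eq tau12 y1 y2) -c_c1 -c_c2.
Qed.

Lemma QC_fiber_le (c : CT) j : \sum_(c' | tauC c' == j) QC c c' <= P (tauC c) j.
Proof.
case: (pickP (fun c' => (tauC c' == j) && (QC c c' != 0))) => [c1 /andP [/eqP tc1 Qc1]|none].
  rewrite (bigD1 c1) /=; last by apply/eqP.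
  rewrite [X in _ + X]big1 ?addr0 => [|c' /andP [/eqP tc' c'1]]; first by rewrite QCE // tc1.
  by apply/eqP; apply: contraNT c'1 => Qc'; apply/eqP/(QC_succ_inj Qc' Qc1); rewrite tc' tc1.
rewrite big1 => [|c' tc']; first exact: HP.1.
by move: (none c'); rewrite tc' /= => /negbFE/eqP.
Qed.

Variables (L : bstate K -> 'M[R]_2) (eps : branch P A Mc -> R).
Hypothesis HL : forall s, L s \in unitmx.
Hypothesis Heps : forall r, eps r = 1 \/ eps r = -1.

Definition Lbound : R := \big[Num.max/0]_s Num.max `|L s| `|invmx (L s)|.

Lemma Lbound_ge s : `|L s| <= Lbound /\ `|invmx (L s)| <= Lbound.
Proof.
have := le_bigmax 0 (fun s => Num.max `|L s| `|invmx (L s)|) s.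
by rewrite -/Lbound ge_max => /andP.
Qed.

Lemma mprod_BmE (y : nat -> CT) : (forall k, QC (y k) (y k.+1) != 0) -> forall n,
  mprod (fun c => Bm L eps (val c)) y n =
  (\prod_(k < n) eps (val (y k))) *:
    (invmx (L (bs (val (y n)))) *m mprod A (tauC \o y) n *m L (bs (val (y 0%N)))).
Proof.
move=> y_path; apply: (@mprod_conj R X CT A _ (tauC \o y) y (fun k => L (bs (val (y k))))
  (fun k => eps (val (y k))) (fun k => HL _)) => k.
by rewrite /Bm (QC_link (y_path k)).
Qed.

Lemma normr_prod_eps (y : nat -> CT) n : `|\prod_(k < n) eps (val (y k))| = 1.
Proof.
rewrite normr_prod big1 // => k _.
by case: (Heps (val (y k))) => ->; rewrite ?normrN normr1.
Qed.

Lemma mprod_Bm_norm_le (y : nat -> CT) : (forall k, QC (y k) (y k.+1) != 0) -> forall n,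
  `|mprod (fun c => Bm L eps (val c)) y n| <= 4 * Lbound ^+ 2 * `|mprod A (tauC \o y) n|.
Proof.
move=> y_path n; rewrite mprod_BmE // normrZ normr_prod_eps mul1r.
by apply: mxnorm_conj_le; [exact: (Lbound_ge _).2 | exact: (Lbound_ge _).1].
Qed.

Lemma mprod_A_norm_le (y : nat -> CT) : (forall k, QC (y k) (y k.+1) != 0) -> forall n,
  `|mprod A (tauC \o y) n| <= 4 * Lbound ^+ 2 * `|mprod (fun c => Bm L eps (val c)) y n|.
Proof.
move=> y_path n; rewrite mprod_BmE // normrZ normr_prod_eps mul1r.
set Ln := L (bs _); set L0 := L (bs _); set N := mprod A _ n.
have N_conj : N = Ln *m (invmx Ln *m N *m L0) *m invmx L0.
  by rewrite !mulmxA mulmxV ?mul1mx ?HL // -mulmxA mulmxV ?mulmx1 ?HL.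
rewrite {1}N_conj.
by apply: mxnorm_conj_le; [exact: (Lbound_ge _).1 | exact: (Lbound_ge _).2].
Qed.
End Branches.

Theorem lemma3p3 (R : realType) (X : finType) (P : X -> X -> R)
  (A : X -> 'M[R]_2)
  (HP : stochastic P) (HPirr : irreducible P)
  (HA : forall i, A i \in unitmx)
  (Hpuh : proj_unif_hyp P A)
  (M : X -> set (RP1 R)) (HM : multicone P A M)
  (K : X -> finType) (Mc : forall i, K i -> set (RP1 R))
  (HMc : components_enum M Mc)
  (C : {set branch P A Mc}) (HC : recurrent_class C)
  (L : bstate K -> 'M[R]_2)
  (HL : forall s : bstate K, L s \in unitmx /\
          act (L s) @` @Vcone R = closure (Mc (tag s) (tagged s)))
  (eps : branch P A Mc -> R) (Heps : forall r, eps r = 1 \/ eps r = -1)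
  (HB : forall r i j, 0 < Bm L eps r i j)
  (p : X -> R) (Hp : stationary p P)
  (q : {r : branch P A Mc | r \in C} -> R) (Hq : stationary q (QC (C:=C)))
  (x0 : X) (c0 : {r : branch P A Mc | r \in C})
  (mu : probability (seqms x0) R) (Hmu : markov_measure p P mu)
  (muC : probability (seqms c0) R) (HmuC : markov_measure q (QC (C:=C)) muC)
  (lamA lamB : R)
  (HlamA : lyap_ae mu A lamA)
  (HlamB : lyap_ae muC (fun c => Bm L eps (val c)) lamB) :
  lamB = lamA.
Proof.
have QC_nonneg := QC_ge0 (C := C) HP.
have QC_fiber := QC_fiber_le HMc (C := C) HP.
have p_lump : p = lump (tauC (C := C)) q.
  exact: (stationary_unique HP HPirr (stationary_lump HP Hq QC_fiber) Hp).
rewrite p_lump in Hmu.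
have cyl_push := markov_measure_lump HP QC_nonneg Hq QC_fiber Hmu HmuC.
have muC_gt0 : (0 < muC setT)%E by rewrite probability_setT lte01.
have ae_proper := ae_properfilter_algebraOfSetsType muC_gt0.
suff : {ae muC, forall y : seqms c0, lamB = lamA} by case/(filter_ex (FF := ae_proper)).
apply: (filterS3 (ae_filter_ringOfSetsType muC) _ HlamB (ae_seqmap cyl_push HlamA)
  (markov_ae_path HmuC)) => y y_B y_A y_path.
have L_unit s := (HL s).1.
apply: (growth_rate_eq _ _ (mprod_Bm_norm_le L_unit Heps y_path)
  (mprod_A_norm_le L_unit Heps y_path) y_B y_A) => n.
- exact: normr_ge0.
- exact/unitmx_normr_gt0/mprod_unitmx.
Qed.
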